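(* Assume $(g,\mathfrak{D})$ satisfy B1–B3 with constant $\kappa>0$. Then for every $X\in\mathbb{R}^{m\times n}$ and every $D\in\mathfrak{D}$, with the norm $\|\cdot\|=\|\cdot\|_{1\to2}$, $$L_X(D)\le\frac{2}{n\sqrt\kappa}\|X\|_F^2,\qquad C_X(D)\le\frac{2}{n\kappa}\|X\|_F^2.$$
   Context: $\mathfrak{D}\subset\mathbb{R}^{m\times d}$. B1: $g=\chi_{\mathcal K}$ is the indicator of a set $\mathcal K\subset\mathbb{R}^d$ ($0$ on $\mathcal K$, $+\infty$ outside); B2: $\kappa\|\alpha\|_1^2\le\|D\alpha\|_2^2$ for all $\alpha\in\mathcal K$, $D\in\mathfrak{D}$; B3: $0\in\mathcal K$. $\mathcal{L}_x(D,\alpha)=\tfrac12\|x-D\alpha\|_2^2+g(\alpha)$, $f_x(D)=\inf_\alpha\mathcal{L}_x(D,\alpha)$. $\|\Delta\|_{1\to2}=\max_j\|\delta_j\|_2$ with dual norm $\|\cdot\|_\star$ w.r.t. the Frobenius inner product. For $X=[x_1,\dots,x_n]$ and $\epsilon>0$, $\mathfrak{A}_\epsilon(X,D)=\{A=[\alpha_1,\dots,\alpha_n]:\ \mathcal{L}_{x_i}(D,\alpha_i)\le f_{x_i}(D)+\epsilon\ \forall i\}$; $L_X(D)=\inf_{\epsilon>0}\sup_{A\in\mathfrak{A}_\epsilon(X,D)}\frac1n\|(X-DA)A^\top\|_\star$, $C_X(D)=\inf_{\epsilon>0}\sup_{A\in\mathfrak{A}_\epsilon(X,D)}\frac1{2n}\sum_i\|\alpha_i\|_1^2$.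 *)

From Stdlib Require Import Reals Lra Classical ClassicalEpsilon.
Open Scope R_scope.

(* Vectors are functions nat -> R (only indices < dimension matter);
   matrices are functions nat -> nat -> R (row index, column index). *)

Fixpoint fsum (k : nat) (f : nat -> R) : R :=
  match k with O => 0 | S k' => fsum k' f + f k' end.

Fixpoint fmax (k : nat) (f : nat -> R) : R :=
  match k with O => 0 | S k' => Rmax (fmax k' f) (f k') end.

Inductive Ebar := Fin (r : R) | PInf | NInf.

Definition Ele (x y : Ebar) : Prop :=
  match x, y with
  | NInf, _ => True
  | _, PInf => True
  | Fin a, Fin b => a <= b
  | _, _ => False
  end.

Definition Eadd (x y : Ebar) : Ebar :=
  match x, y with
  | Fin a, Fin b => Fin (a + b)
  | PInf, NInf | NInf, PInf => PInf (* not used *)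
  | PInf, _ | _, PInf => PInf
  | NInf, _ | _, NInf => NInf
  end.

(* multiplication by a (positive) real scalar *)
Definition Escale (c : R) (x : Ebar) : Ebar :=
  match x with Fin a => Fin (c * a) | PInf => PInf | NInf => NInf end.

Definition is_lub_E (S : Ebar -> Prop) (x : Ebar) : Prop :=
  (forall y, S y -> Ele y x) /\ (forall z, (forall y, S y -> Ele y z) -> Ele x z).
Definition is_glb_E (S : Ebar -> Prop) (x : Ebar) : Prop :=
  (forall y, S y -> Ele x y) /\ (forall z, (forall y, S y -> Ele z y) -> Ele z x).

Definition Esup (S : Ebar -> Prop) : Ebar := epsilon (inhabits PInf) (is_lub_E S).
Definition Einf (S : Ebar -> Prop) : Ebar := epsilon (inhabits PInf) (is_glb_E S).

Definition sqnorm2 (m : nat) (v : nat -> R) : R := fsum m (fun i => v i ^ 2).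
Definition norm1 (d : nat) (a : nat -> R) : R := fsum d (fun j => Rabs (a j)).
Definition frob2 (m n : nat) (X : nat -> nat -> R) : R :=
  fsum m (fun i => fsum n (fun k => X i k ^ 2)).
Definition col (M : nat -> nat -> R) (k : nat) : nat -> R := fun i => M i k.
Definition matvec (d : nat) (D : nat -> nat -> R) (a : nat -> R) : nat -> R :=
  fun i => fsum d (fun j => D i j * a j).

(* ||Delta||_{1->2} = max_j ||delta_j||_2 for Delta in R^{m x d} *)
Definition norm12 (m d : nat) (Delta : nat -> nat -> R) : R :=
  fmax d (fun j => sqrt (sqnorm2 m (col Delta j))).
Definition frob_inner (m d : nat) (M N : nat -> nat -> R) : R :=
  fsum m (fun i => fsum d (fun j => M i j * N i j)).
Definition dualnorm12 (m d : nat) (M : nat -> nat -> R) : Ebar :=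
  Esup (fun e => exists Delta, norm12 m d Delta <= 1 /\ e = Fin (frob_inner m d M Delta)).

(* g = chi_K, indicator of K *)
Definition chi (K : (nat -> R) -> Prop) (a : nat -> R) : Ebar :=
  if excluded_middle_informative (K a) then Fin 0 else PInf.

Definition Lx (m d : nat) (K : (nat -> R) -> Prop) (x : nat -> R)
    (D : nat -> nat -> R) (a : nat -> R) : Ebar :=
  Eadd (Fin (/2 * sqnorm2 m (fun i => x i - matvec d D a i))) (chi K a).

Definition fx (m d : nat) (K : (nat -> R) -> Prop) (x : nat -> R)
    (D : nat -> nat -> R) : Ebar :=
  Einf (fun e => exists a, e = Lx m d K x D a).

Definition Aeps (m d n : nat) (K : (nat -> R) -> Prop) (eps : R)
    (X D A : nat -> nat -> R) : Prop :=
  forall i, (i < n)%nat ->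
    Ele (Lx m d K (col X i) D (col A i)) (Eadd (fx m d K (col X i) D) (Fin eps)).

Definition residA (d n : nat) (X D A : nat -> nat -> R) : nat -> nat -> R :=
  fun i j => fsum n (fun k => (X i k - fsum d (fun l => D i l * A l k)) * A j k).

Definition LX (m d n : nat) (K : (nat -> R) -> Prop) (X D : nat -> nat -> R) : Ebar :=
  Einf (fun e => exists eps, eps > 0 /\
    e = Esup (fun v => exists A, Aeps m d n K eps X D A /\
                 v = Escale (/ INR n) (dualnorm12 m d (residA d n X D A)))).

Definition CX (m d n : nat) (K : (nat -> R) -> Prop) (X D : nat -> nat -> R) : Ebar :=
  Einf (fun e => exists eps, eps > 0 /\
    e = Esup (fun v => exists A, Aeps m d n K eps X D A /\
                 v = Fin (/ (2 * INR n) * fsum n (fun i => norm1 d (col A i) ^ 2)))).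

From Stdlib Require Import Reals Lra Lia Classical ClassicalEpsilon.
Open Scope R_scope.

(* Fix eps > 0 and an eps-minimizing code matrix A = [alpha_1 .. alpha_n].
   Because 0 is admissible (B3), f_x(D) <= ||x||^2/2, so every column satisfies
   alpha_k in K and ||x_k - D alpha_k||^2 <= ||x_k||^2 + 2 eps; with
   ||D alpha||^2 <= 2||x||^2 + 2||x - D alpha||^2 and B2 this gives
   kappa ||alpha_k||_1^2 <= 4||x_k||^2 + 4 eps, which yields the C_X bound.
   For L_X, the pairing <(X - DA)A^T, Delta> splits into column terms
   <x_k - D alpha_k, Delta alpha_k>; when ||Delta||_{1->2} <= 1 a weighted
   Cauchy-Schwarz inequality gives ||Delta alpha||_2 <= ||alpha||_1, and AM-GM
   with weight sqrt kappa bounds each term by (2||x_k||^2 + 3 eps)/sqrt kappa.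
   In both cases the eps-dependent slack disappears in the infimum over eps. *)

Lemma Ele_trans x y z : Ele x y -> Ele y z -> Ele x z.
Proof. destruct x, y, z; simpl; try tauto; lra. Qed.

(* Every set of extended reals has a least upper bound (completeness of R,
   plus the cases of an unbounded set and a set with no finite element). *)
Lemma lub_exists (S : Ebar -> Prop) : exists x, is_lub_E S x.
Proof.
destruct (classic (S PInf)) as [HP | HP].
{ exists PInf; split; [intros [] _; exact I | intros z Hz; exact (Hz _ HP)]. }
destruct (classic (exists r, S (Fin r))) as [[r0 Hr0] | Hnofin].
2:{ exists NInf; split; [|intros; exact I].
    intros [r| |] Hy; [exfalso; eauto | contradiction | exact I]. }
destruct (classic (bound (fun r => S (Fin r)))) as [Hb | Hunb].
- destruct (completeness _ Hb (ex_intro _ r0 Hr0)) as [M [HubM HleastM]].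
  exists (Fin M); split.
  + intros [r| |] Hy; simpl; [exact (HubM _ Hy) | contradiction | exact I].
  + intros [b| |] Hz; simpl.
    * apply HleastM; intros r Hr; exact (Hz _ Hr).
    * exact I.
    * exact (Hz _ Hr0).
- exists PInf; split; [intros [] _; exact I|].
  intros [b| |] Hz; simpl.
  + apply Hunb; exists b; intros r Hr; exact (Hz _ Hr).
  + exact I.
  + exact (Hz _ Hr0).
Qed.

(* The greatest lower bound of S is the least upper bound of its lower bounds. *)
Lemma glb_exists (S : Ebar -> Prop) : exists x, is_glb_E S x.
Proof.
destruct (lub_exists (fun z => forall y, S y -> Ele z y)) as [x [Hub Hleast]].
exists x; split.
- intros y Hy; apply Hleast; intros z Hz; exact (Hz _ Hy).
- intros z Hz; exact (Hub _ Hz).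
Qed.

Lemma Esup_least (S : Ebar -> Prop) z : (forall y, S y -> Ele y z) -> Ele (Esup S) z.
Proof.
intros H; apply (proj2 (epsilon_spec (inhabits PInf) _ (lub_exists S))); exact H.
Qed.

Lemma Einf_lower (S : Ebar -> Prop) y : S y -> Ele (Einf S) y.
Proof. apply (proj1 (epsilon_spec (inhabits PInf) _ (glb_exists S))). Qed.

Lemma Ele_Fin_approx y c b : 0 <= b ->
  (forall eps, eps > 0 -> Ele y (Fin (c + b * eps))) -> Ele y (Fin c).
Proof.
intros Hb H; destruct y as [x| |]; simpl; [| exact (H 1 ltac:(lra)) | exact I].
destruct (Rle_dec x c) as [Hle | Hgt]; [exact Hle|].
set (eps := (x - c) / (b + 1)).
assert (Heps : eps * (b + 1) = x - c) by (unfold eps; field; lra).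
assert (Hpos : eps > 0) by (unfold eps; apply Rdiv_lt_0_compat; lra).
specialize (H eps Hpos); simpl in H; nra.
Qed.

(* The form in which L_X and C_X are bounded: an infimum over eps > 0 of
   quantities that are at most c + b*eps is at most c. *)
Lemma Einf_eps_bound (G : R -> Ebar) c b : 0 <= b ->
  (forall eps, eps > 0 -> Ele (G eps) (Fin (c + b * eps))) ->
  Ele (Einf (fun e => exists eps, eps > 0 /\ e = G eps)) (Fin c).
Proof.
intros Hb H; apply (Ele_Fin_approx _ _ b Hb); intros eps Heps.
apply (Ele_trans _ (G eps)); [apply Einf_lower; eauto | exact (H eps Heps)].
Qed.

Lemma Escale_le c y t : 0 <= c -> Ele y (Fin t) -> Ele (Escale c y) (Fin (c * t)).
Proof. intros Hc H; destruct y; simpl in *; auto; nra. Qed.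

Lemma fsum_ext n f g : (forall k, (k < n)%nat -> f k = g k) -> fsum n f = fsum n g.
Proof. induction n; simpl; intros H; auto. rewrite IHn, H; auto. Qed.

Lemma fsum_le n f g : (forall k, (k < n)%nat -> f k <= g k) -> fsum n f <= fsum n g.
Proof.
induction n; simpl; intros H; [lra|].
assert (f n <= g n) by auto; assert (fsum n f <= fsum n g) by auto; lra.
Qed.

Lemma fsum_plus n f g : fsum n (fun k => f k + g k) = fsum n f + fsum n g.
Proof. induction n; simpl; [lra | rewrite IHn; lra]. Qed.

Lemma fsum_scal n c f : fsum n (fun k => c * f k) = c * fsum n f.
Proof. induction n; simpl; [lra | rewrite IHn; lra]. Qed.

Lemma fsum_const n c : fsum n (fun _ => c) = INR n * c.
Proof. induction n; simpl fsum; [simpl; lra | rewrite IHn, S_INR; lra]. Qed.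

Lemma fsum_swap m n f :
  fsum m (fun i => fsum n (fun k => f i k)) = fsum n (fun k => fsum m (fun i => f i k)).
Proof.
induction m; simpl; [rewrite fsum_const; simpl; lra | rewrite IHm, <- fsum_plus; reflexivity].
Qed.

Lemma fsum_nonneg n f : (forall k, (k < n)%nat -> 0 <= f k) -> 0 <= fsum n f.
Proof. intros H; rewrite <- (Rmult_0_r (INR n)), <- fsum_const; apply fsum_le; auto. Qed.

Lemma fsum_affine n c b s : fsum n (fun k => c * s k + b) = c * fsum n s + INR n * b.
Proof. rewrite fsum_plus, fsum_scal, fsum_const; reflexivity. Qed.

Lemma fmax_ge d f j : (j < d)%nat -> f j <= fmax d f.
Proof.
induction d; simpl; intros H; [lia|].
destruct (Nat.eq_dec j d) as [-> | Hne]; [apply Rmax_r|].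
eapply Rle_trans; [apply IHd; lia | apply Rmax_l].
Qed.

Lemma sqnorm2_nonneg m v : 0 <= sqnorm2 m v.
Proof. apply fsum_nonneg; intros; apply pow2_ge_0. Qed.

Lemma norm1_nonneg d a : 0 <= norm1 d a.
Proof. apply fsum_nonneg; intros; apply Rabs_pos. Qed.

Lemma frob2_cols m n X : frob2 m n X = fsum n (fun k => sqnorm2 m (col X k)).
Proof. apply fsum_swap. Qed.

(* Discriminant criterion: a nonnegative quadratic A u^2 - 2 B u + C. *)
Lemma quadratic_nonneg A B C u :
  0 <= A -> 0 <= C -> B ^ 2 <= A * C -> 2 * B * u <= A * u ^ 2 + C.
Proof.
intros HA HC HB; destruct (Req_dec A 0) as [-> | HA0].
- assert (B = 0) by (apply Rsqr_0_uniq; unfold Rsqr; nra); subst; nra.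
- assert (A * (A * u ^ 2 + C - 2 * B * u) = (A * u - B) ^ 2 + (A * C - B ^ 2)) by ring.
  pose proof (pow2_ge_0 (A * u - B)).
  assert (0 <= A * u ^ 2 + C - 2 * B * u); [apply (Rmult_le_reg_l A); lra | lra].
Qed.

Lemma weighted_cauchy_schwarz d a u :
  fsum d (fun j => a j * u j) ^ 2 <=
  fsum d (fun j => Rabs (a j)) * fsum d (fun j => Rabs (a j) * u j ^ 2).
Proof.
induction d as [|d IH]; cbn [fsum]; [simpl; lra|].
set (B := fsum d (fun j => a j * u j)) in *.
set (A := fsum d (fun j => Rabs (a j))) in *.
set (C := fsum d (fun j => Rabs (a j) * u j ^ 2)) in *.
assert (HA : 0 <= A) by (apply fsum_nonneg; intros; apply Rabs_pos).
assert (HC : 0 <= C).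
{ apply fsum_nonneg; intros k _; pose proof (Rabs_pos (a k)); pose proof (pow2_ge_0 (u k)); nra. }
assert (Hcross : 2 * B * (a d * u d) <= Rabs (a d) * (A * u d ^ 2 + C)).
{ destruct (Rle_dec 0 (a d)).
  - rewrite Rabs_right by lra; pose proof (quadratic_nonneg A B C (u d) HA HC IH); nra.
  - rewrite Rabs_left by lra; pose proof (quadratic_nonneg A B C (- u d) HA HC IH); nra. }
assert (Habs : Rabs (a d) ^ 2 = a d ^ 2) by (rewrite <- !Rsqr_pow2; symmetry; apply Rsqr_abs).
replace ((B + a d * u d) ^ 2) with (B ^ 2 + 2 * B * (a d * u d) + Rabs (a d) ^ 2 * u d ^ 2)
  by (rewrite Habs; ring).
replace ((A + Rabs (a d)) * (C + Rabs (a d) * u d ^ 2)) with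
  (A * C + Rabs (a d) * (A * u d ^ 2 + C) + Rabs (a d) ^ 2 * u d ^ 2) by ring.
lra.
Qed.

Lemma matvec_norm12_bound m d Delta a :
  norm12 m d Delta <= 1 -> sqnorm2 m (matvec d Delta a) <= norm1 d a ^ 2.
Proof.
intros Hnorm.
assert (Hcol : forall j, (j < d)%nat -> sqnorm2 m (col Delta j) <= 1).
{ intros j Hj.
  pose proof (fmax_ge d (fun j => sqrt (sqnorm2 m (col Delta j))) j Hj) as Hj1.
  unfold norm12 in Hnorm.
  pose proof (sqnorm2_nonneg m (col Delta j)) as Hp.
  rewrite <- (sqrt_sqrt _ Hp); pose proof (sqrt_pos (sqnorm2 m (col Delta j))); nra. }
unfold sqnorm2 at 1, matvec.
apply (Rle_trans _ (fsum m (fun i => norm1 d a * fsum d (fun j => Rabs (a j) * Delta i j ^ 2)))).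
{ apply fsum_le; intros i _.
  rewrite (fsum_ext d _ (fun j => a j * Delta i j)) by (intros; ring).
  apply weighted_cauchy_schwarz. }
rewrite fsum_scal, fsum_swap.
pose proof (norm1_nonneg d a) as HN.
replace (norm1 d a ^ 2) with (norm1 d a * norm1 d a) by ring.
apply Rmult_le_compat_l; [exact HN|].
apply fsum_le; intros j Hj; rewrite fsum_scal.
pose proof (Hcol j Hj); pose proof (Rabs_pos (a j)); unfold sqnorm2, col in *; nra.
Qed.

Lemma pairing_amgm m c r v : c > 0 ->
  fsum m (fun i => r i * v i) <= / c * sqnorm2 m r + c / 4 * sqnorm2 m v.
Proof.
intros Hc; unfold sqnorm2; rewrite <- !fsum_scal, <- fsum_plus.
apply fsum_le; intros i _.
apply (Rmult_le_reg_l c); [exact Hc|].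
replace (c * (/ c * r i ^ 2 + c / 4 * v i ^ 2))
  with ((r i - c * v i / 2) ^ 2 + c * (r i * v i)) by (field; lra).
pose proof (pow2_ge_0 (r i - c * v i / 2)); lra.
Qed.

Lemma frob_inner_residA m d n X D A Delta :
  frob_inner m d (residA d n X D A) Delta =
  fsum n (fun k => fsum m (fun i =>
    (col X k i - matvec d D (col A k) i) * matvec d Delta (col A k) i)).
Proof.
unfold frob_inner, residA, matvec, col; rewrite <- (fsum_swap m n).
apply fsum_ext; intros i _.
rewrite (fsum_ext d _ (fun j => fsum n (fun k =>
  Delta i j * ((X i k - fsum d (fun l => D i l * A l k)) * A j k)))).
2:{ intros j _; rewrite fsum_scal; ring. }
rewrite fsum_swap; apply fsum_ext; intros k _.
rewrite <- fsum_scal; apply fsum_ext; intros; ring.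
Qed.

Lemma sqnorm2_le_split m x v :
  sqnorm2 m v <= 2 * sqnorm2 m x + 2 * sqnorm2 m (fun i => x i - v i).
Proof.
unfold sqnorm2; rewrite <- !fsum_scal, <- fsum_plus; apply fsum_le; intros i _.
pose proof (pow2_ge_0 (2 * x i - v i)); nra.
Qed.

Section NearMinimizers.
Variables (m d : nat) (K : (nat -> R) -> Prop) (D : nat -> nat -> R).
Hypothesis K0 : K (fun _ => 0).

Lemma fx_le_half_sqnorm x : Ele (fx m d K x D) (Fin (/ 2 * sqnorm2 m x)).
Proof.
apply (Ele_trans _ (Lx m d K x D (fun _ => 0))); [apply Einf_lower; eauto|].
unfold Lx, chi; destruct (excluded_middle_informative (K (fun _ => 0))) as [_ | HK0];
  [| contradiction].
simpl; rewrite Rplus_0_r; right; f_equal.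
apply fsum_ext; intros i _; unfold matvec.
rewrite (fsum_ext _ _ (fun _ => 0 * 0)) by (intros; ring).
rewrite fsum_const; ring.
Qed.

Lemma near_minimizer_residual x a eps :
  Ele (Lx m d K x D a) (Eadd (fx m d K x D) (Fin eps)) ->
  K a /\ sqnorm2 m (fun i => x i - matvec d D a i) <= sqnorm2 m x + 2 * eps.
Proof.
intros Hnear; pose proof (fx_le_half_sqnorm x) as Hfx.
destruct (fx m d K x D) as [f| |]; unfold Lx, chi in Hnear;
  destruct (excluded_middle_informative (K a)); simpl in *; try contradiction.
split; [assumption | lra].
Qed.

Variable kappa : R.
Hypothesis kappa_pos : kappa > 0.
Hypothesis B2_at_D : forall a, K a -> kappa * norm1 d a ^ 2 <= sqnorm2 m (matvec d D a).

(* Condition B2 turns the residual bound into kappa ||alpha||_1^2 <= 4||x||^2 + 4 eps. *)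
Lemma near_minimizer_norm1 x a eps :
  Ele (Lx m d K x D a) (Eadd (fx m d K x D) (Fin eps)) ->
  kappa * norm1 d a ^ 2 <= 4 * sqnorm2 m x + 4 * eps.
Proof.
intros Hnear; destruct (near_minimizer_residual x a eps Hnear) as [Ka Hres].
pose proof (B2_at_D a Ka); pose proof (sqnorm2_le_split m x (matvec d D a)); lra.
Qed.

(* For ||Delta||_{1->2} <= 1, the pairing of the residual with Delta alpha is
   at most (2||x||^2 + 3 eps) / sqrt kappa (AM-GM with weight sqrt kappa). *)
Lemma near_minimizer_pairing x a eps Delta :
  Ele (Lx m d K x D a) (Eadd (fx m d K x D) (Fin eps)) ->
  norm12 m d Delta <= 1 ->
  fsum m (fun i => (x i - matvec d D a i) * matvec d Delta a i)
    <= (2 * sqnorm2 m x + 3 * eps) / sqrt kappa.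
Proof.
intros Hnear HDelta.
set (c := sqrt kappa).
assert (Hc : c > 0) by (apply sqrt_lt_R0; lra).
assert (Hcc : c * c = kappa) by (apply sqrt_sqrt; lra).
pose proof (proj2 (near_minimizer_residual x a eps Hnear)) as Hres.
pose proof (near_minimizer_norm1 x a eps Hnear) as Hnorm1.
pose proof (matvec_norm12_bound m d Delta a HDelta) as Hv.
eapply Rle_trans; [apply pairing_amgm, Hc|].
apply (Rmult_le_reg_l c); [exact Hc|].
replace (c * (/ c * sqnorm2 m (fun i => x i - matvec d D a i)
              + c / 4 * sqnorm2 m (matvec d Delta a)))
  with (sqnorm2 m (fun i => x i - matvec d D a i) + kappa / 4 * sqnorm2 m (matvec d Delta a))
  by (rewrite <- Hcc; field; lra).
replace (c * ((2 * sqnorm2 m x + 3 * eps) / c)) with (2 * sqnorm2 m x + 3 * eps)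
  by (field; lra).
nra.
Qed.

End NearMinimizers.

Section Bounds.
Variables (m d n : nat) (K : (nat -> R) -> Prop) (X D : nat -> nat -> R) (kappa : R).
Hypothesis K0 : K (fun _ => 0).
Hypothesis kappa_pos : kappa > 0.
Hypothesis B2_at_D : forall a, K a -> kappa * norm1 d a ^ 2 <= sqnorm2 m (matvec d D a).
Hypothesis n_pos : (0 < n)%nat.

Let sqrtk_pos : sqrt kappa > 0.
Proof. apply sqrt_lt_R0; lra. Qed.

Let INRn_pos : INR n > 0.
Proof. apply lt_0_INR; exact n_pos. Qed.

(* Summing the column pairings bounds the dual norm of (X - DA)A^T for every
   eps-minimizing code matrix A. *)
Lemma dualnorm12_residA_bound eps A : Aeps m d n K eps X D A ->
  Ele (dualnorm12 m d (residA d n X D A))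
      (Fin (fsum n (fun k => 2 / sqrt kappa * sqnorm2 m (col X k) + 3 * eps / sqrt kappa))).
Proof.
intros HA; apply Esup_least; intros y [Delta [HDelta ->]]; simpl.
rewrite frob_inner_residA; apply fsum_le; intros k Hk.
eapply Rle_trans; [apply (near_minimizer_pairing m d K D K0 kappa); eauto|].
right; field; lra.
Qed.

Lemma LX_bound : Ele (LX m d n K X D) (Fin (2 / (INR n * sqrt kappa) * frob2 m n X)).
Proof.
apply (Einf_eps_bound _ _ (3 / sqrt kappa)).
{ apply Rlt_le, Rdiv_lt_0_compat; lra. }
intros eps Heps; apply Esup_least; intros y [A [HA ->]].
eapply Ele_trans.
{ apply Escale_le; [apply Rlt_le, Rinv_0_lt_compat; lra|].
  exact (dualnorm12_residA_bound eps A HA). }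
simpl; right; rewrite fsum_affine, frob2_cols; field; lra.
Qed.

Lemma CX_bound : Ele (CX m d n K X D) (Fin (2 / (INR n * kappa) * frob2 m n X)).
Proof.
apply (Einf_eps_bound _ _ (2 / kappa)).
{ apply Rlt_le, Rdiv_lt_0_compat; lra. }
intros eps Heps; apply Esup_least; intros y [A [HA ->]]; cbn [Ele].
assert (Hcols : fsum n (fun k => norm1 d (col A k) ^ 2)
                <= fsum n (fun k => 4 / kappa * sqnorm2 m (col X k) + 4 * eps / kappa)).
{ apply fsum_le; intros k Hk.
  pose proof (near_minimizer_norm1 m d K D K0 kappa B2_at_D _ _ _ (HA k Hk)).
  apply (Rmult_le_reg_l kappa); [exact kappa_pos|].
  replace (kappa * (4 / kappa * sqnorm2 m (col X k) + 4 * eps / kappa))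
    with (4 * sqnorm2 m (col X k) + 4 * eps) by (field; lra).
  lra. }
rewrite fsum_affine in Hcols; rewrite frob2_cols.
apply (Rmult_le_reg_l (2 * INR n)); [lra|].
replace (2 * INR n * (/ (2 * INR n) * fsum n (fun k => norm1 d (col A k) ^ 2)))
  with (fsum n (fun k => norm1 d (col A k) ^ 2)) by (field; lra).
replace (2 * INR n * (2 / (INR n * kappa) * fsum n (fun k => sqnorm2 m (col X k)) + 2 / kappa * eps))
  with (4 / kappa * fsum n (fun k => sqnorm2 m (col X k)) + INR n * (4 * eps / kappa))
  by (field; lra).
exact Hcols.
Qed.

End Bounds.

Theorem mainTheorem8
  (m d n : nat) (K : (nat -> R) -> Prop) (Dset : (nat -> nat -> R) -> Prop)
  (kappa : R) (hkappa : kappa > 0)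
  (B2 : forall (a : nat -> R) (D : nat -> nat -> R), K a -> Dset D ->
          kappa * (norm1 d a) ^ 2 <= sqnorm2 m (matvec d D a))
  (B3 : K (fun _ => 0))
  (hn : (0 < n)%nat)
  (X D : nat -> nat -> R) (hD : Dset D) :
  Ele (LX m d n K X D) (Fin (2 / (INR n * sqrt kappa) * frob2 m n X)) /\
  Ele (CX m d n K X D) (Fin (2 / (INR n * kappa) * frob2 m n X)).
Proof.
assert (B2_at_D : forall a, K a -> kappa * norm1 d a ^ 2 <= sqnorm2 m (matvec d D a))
  by (intros a Ka; exact (B2 a D Ka hD)).
split; [apply LX_bound | apply CX_bound]; assumption.
Qed.
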